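(* Let $k,n$ be positive integers. A graph $G$ with $n$ vertices satisfies $\kappa'(G)=\tau(G)=k$ if and only if $G$ has an edge-cut of size $k$ and a spanning subgraph belonging to $\mathcal{F}_{k,n}$.
   Context: Graphs are finite, loopless, possibly with multiple edges. $\kappa'(G)$ is the edge connectivity; $\tau(G)$ is the maximum number of edge-disjoint spanning trees of a connected graph $G$. An edge-cut is a minimal set of edges whose removal increases the number of components. For $n>1$, $\mathcal{F}_{k,n}$ is the set of graphs $G$ on $n$ vertices with $\kappa'(G)=\tau(G)=k$ whose number of edges is minimum among all graphs on $n$ vertices with $\kappa'=\tau=k$. *)

From mathcomp Require Import all_boot.
Set Implicit Arguments. Unset Strict Implicit. Unset Printing Implicit Defensive.

(* A finite loopless multigraph on the vertex set 'I_n is given by its list of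
   edges; edge number i (i : 'I_(size g)) joins the two vertices of the pair
   tnth (in_tuple g) i.  Parallel edges are allowed (repeated pairs). *)
Definition mgraph (n : nat) := seq ('I_n * 'I_n).

Definition loopless n (g : mgraph n) : bool := all (fun e => e.1 != e.2) g.

Definition edge n (g : mgraph n) := 'I_(size g).

Definition ends n (g : mgraph n) (i : edge g) : 'I_n * 'I_n := tnth (in_tuple g) i.

Definition adj n (g : mgraph n) (A : {set edge g}) : rel 'I_n :=
  fun u v => [exists i in A, (ends i == (u, v)) || (ends i == (v, u))].

Definition conn n (g : mgraph n) (A : {set edge g}) : Prop :=
  forall u v : 'I_n, connect (adj A) u v.

Definition ncomp n (g : mgraph n) (A : {set edge g}) : nat :=
  n_comp (adj A) predT.

Definition spanning_tree n (g : mgraph n) (T : {set edge g}) : Prop :=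
  conn T /\ forall e, e \in T -> ~ conn (T :\ e).

Definition edge_cut n (g : mgraph n) (C : {set edge g}) : Prop :=
  ncomp [set: edge g] < ncomp (~: C) /\
  forall C' : {set edge g}, C' \proper C -> ncomp (~: C') <= ncomp [set: edge g].

Definition kappa_eq n (g : mgraph n) (k : nat) : Prop :=
  (exists A : {set edge g}, ~ conn (~: A) /\ #|A| = k) /\
  (forall A : {set edge g}, ~ conn (~: A) -> k <= #|A|).

Definition has_disjoint_trees n (g : mgraph n) (m : nat) : Prop :=
  exists F : 'I_m -> {set edge g},
    (forall i, spanning_tree (F i)) /\
    (forall i j, i != j -> [disjoint F i & F j]).

Definition tau_eq n (g : mgraph n) (k : nat) : Prop :=
  conn [set: edge g] /\ has_disjoint_trees g k /\ ~ has_disjoint_trees g k.+1.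

Definition kt_eq n (g : mgraph n) (k : nat) : Prop := kappa_eq g k /\ tau_eq g k.

Definition inF (k n : nat) (g : mgraph n) : Prop :=
  1 < n /\ loopless g /\ kt_eq g k /\
  forall g' : mgraph n, loopless g' -> kt_eq g' k -> size g <= size g'.

Definition subgraph n (g : mgraph n) (A : {set edge g}) : mgraph n :=
  mask [seq i \in A | i <- enum 'I_(size g)] g.
Arguments inF k n g : clear implicits.

(* A graph has kappa' = tau = k exactly when it has k edge-disjoint spanning
   trees and a disconnecting set of at most k edges: every spanning tree meets
   every disconnecting set, so the trees force kappa' >= k, and a (k+1)-st tree
   would have to meet the small disconnecting set too.  Every spanning tree has
   n - 1 edges, so a graph with tau = k has at least k(n - 1) edges, while the
   union of k disjoint spanning trees of G has exactly k(n - 1) edges and, with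
   the trace of a minimum disconnecting set, still satisfies the criterion; it
   therefore lies in F_{k,n}.  Conversely, a spanning subgraph in F_{k,n} hands
   its k trees to G, and an edge-cut of size k of the connected graph G
   disconnects it. *)

From mathcomp Require Import all_boot.
Set Implicit Arguments. Unset Strict Implicit. Unset Printing Implicit Defensive.

Lemma connect_cross (T : finType) (e : rel T) (X : {pred T}) x y :
  connect e x y -> x \in X -> y \notin X ->
  exists u v, [/\ u \in X, v \notin X & e u v].
Proof.
case/connectP=> p + ->; elim: p x => [|z p IHp] x /=; first by move=> _ ->.
case/andP=> exz ezp xX; case: (boolP (z \in X)) => [zX|zX _]; first exact: IHp.
by exists x, z.
Qed.

Lemma card_bigcup_disjoint (I T : finType) (F : I -> {set T}) :
  (forall i j, i != j -> [disjoint F i & F j]) -> #|\bigcup_i F i| = \sum_i #|F i|.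
Proof.
move=> dF; rewrite -sum1_card partition_disjoint_bigcup //.
by apply: eq_bigr => i _; rewrite sum1_card.
Qed.

Lemma imsetD1 (aT rT : finType) (f : aT -> rT) (B : {set aT}) x :
  injective f -> f @: (B :\ x) = f @: B :\ f x.
Proof.
move=> f_inj; apply/setP => y; rewrite !inE; apply/imsetP/andP.
  by case=> z /setD1P[zx zB] ->; rewrite (inj_eq f_inj) zx imset_f.
case=> yfx /imsetP[z zB yz]; exists z => //.
by rewrite !inE zB andbT; apply: contraNneq yfx => zx; rewrite yz zx.
Qed.

Section Connectivity.
Variables (n : nat) (g : mgraph n).
Implicit Types (A B S T : {set edge g}) (X : {set 'I_n}).

Lemma adj_sym A : symmetric (adj A).
Proof.
by move=> u v; apply/existsP/existsP => -[i /andP[iA h]]; exists i; rewrite iA orbC.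
Qed.

Lemma adj_connect_sym A : connect_sym (adj A).
Proof. exact/sym_connect_sym/adj_sym. Qed.

Lemma adjS A B : A \subset B -> subrel (adj A) (adj B).
Proof.
move=> sAB u v /existsP[i /andP[iA h]]; apply/existsP; exists i.
by rewrite (subsetP sAB _ iA).
Qed.

Lemma connectS A B : A \subset B -> subrel (connect (adj A)) (connect (adj B)).
Proof. by move=> sAB; apply: connect_sub => u v /(adjS sAB)/connect1. Qed.

Lemma connS A B : A \subset B -> conn A -> conn B.
Proof. by move=> sAB cA u v; apply: (connectS sAB). Qed.

Lemma conn_from A r : (forall v, connect (adj A) r v) -> conn A.
Proof. by move=> cr u v; apply: connect_trans (cr v); rewrite adj_connect_sym. Qed.

Lemma connP A : reflect (conn A) [forall u, forall v, connect (adj A) u v].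
Proof.
by apply: (iffP forallP) => cA u; [move=> v; apply: (forallP (cA u)) | apply/forallP].
Qed.

Lemma ncomp_conn A : 0 < n -> conn A -> ncomp A = 1.
Proof.
move=> n_gt0 cA; pose r := Ordinal n_gt0.
rewrite /ncomp /n_comp_mem -(card1 (root (adj A) r)); apply: eq_card => x.
rewrite !inE andbT; apply/idP/eqP => [/eqP <- | ->].
  exact/(rootP (adj_connect_sym A))/cA.
exact: roots_root (adj_connect_sym A) r.
Qed.

Lemma ncomp_nconn A : ~ conn A -> 1 < ncomp A.
Proof.
move=> ncA; have /forallPn[u /forallPn[v /negP nuv]] :
    ~~ [forall u, forall v, connect (adj A) u v] by exact/connP.
have ruv : root (adj A) u != root (adj A) v.
  by apply/negP => /eqP/(rootP (adj_connect_sym A)).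
apply: (@leq_trans #|[set root (adj A) u; root (adj A) v]|); first by rewrite cards2 ruv.
rewrite /ncomp /n_comp_mem; apply: subset_leq_card.
apply/subsetP => x; rewrite !inE andbT => /orP[] /eqP ->;
  exact: roots_root (adj_connect_sym A) _.
Qed.

Lemma nconn_gt1 A : ~ conn A -> 1 < n.
Proof.
move/ncomp_nconn/leq_trans; apply.
by rewrite -[X in _ <= X]card_ord; apply: max_card.
Qed.

(* Invariant of Prim's algorithm growing a spanning tree of [A] from [r]. *)
Definition rooted_tree A r X S :=
  [/\ S \subset A, r \in X, #|X| = #|S|.+1,
      {in X, forall x, connect (adj S) r x} &
      {in S, forall i, ((ends i).1 \in X) && ((ends i).2 \in X)}].

Lemma rooted_tree1 A r : rooted_tree A r [set r] set0.
Proof.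
split; rewrite ?sub0set ?set11 ?cards1 ?cards0 //; first by move=> x /set1P ->.
by move=> i; rewrite inE.
Qed.

Lemma rooted_tree_grow A r X S : conn A -> rooted_tree A r X S -> #|X| < n ->
  exists X', exists2 S', rooted_tree A r X' S' & #|S'| = #|S|.+1.
Proof.
move=> cA [sSA rX cardX cS inS] ltXn.
have /subsetPn[w _ wX] : ~~ ([set: 'I_n] \subset X).
  by apply: contraL ltXn => /subset_leq_card; rewrite cardsT card_ord -leqNgt.
have [u [v [uX vX /existsP[i /andP[iA uvi]]]]] := connect_cross (cA r w) rX wX.
have iS : i \notin S by apply: contra vX => /inS; case/orP: uvi => /eqP -> /andP[].
have sSiS : S \subset i |: S := subsetUr _ _.
exists (v |: X), (i |: S); last by rewrite cardsU1 iS.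
split.
- by rewrite subUset sub1set iA sSA.
- by rewrite setU1r.
- by rewrite !cardsU1 vX iS cardX.
- move=> x /setU1P[-> | xX]; last by apply: (connectS sSiS); apply: cS.
  apply: (@connect_trans _ _ u); first by apply: (connectS sSiS); apply: cS.
  by apply/connect1/existsP; exists i; rewrite setU11 uvi.
- move=> j /setU1P[-> | /inS /andP[j1 j2]]; last by rewrite !inE j1 j2 !orbT.
  by case/orP: uvi => /eqP -> /=; rewrite !inE eqxx uX ?orbT.
Qed.

Lemma conn_span_sub A :
  conn A -> exists2 S : {set edge g}, S \subset A & conn S /\ #|S| = n.-1.
Proof.
move=> cA; have [n0 | n_gt0] := posnP n.
  exists set0; rewrite ?sub0set // cards0; split; last by rewrite n0.
  by move=> u; suff : u < 0 by []; rewrite -n0.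
pose r := Ordinal n_gt0.
suff [X [S [sSA _ cardX cS _] cardS]] :
    exists X, exists2 S, rooted_tree A r X S & #|S| = n.-1.
  exists S => //; split=> //; apply: (@conn_from _ r) => v; apply: cS.
  suff -> : X = setT by rewrite inE.
  apply/eqP; rewrite eqEcard subsetT cardsT card_ord cardX cardS.
  by rewrite (prednK n_gt0) leqnn.
have : n.-1 < n by rewrite ltn_predL.
elim: n.-1 => [|m IHm] ltmn.
  by exists [set r]; exists set0; [apply: rooted_tree1 | rewrite cards0].
have [X [S rt cardS]] := IHm (ltnW ltmn).
have [_ _ cardX _ _] := rt.
by rewrite -cardS; apply: rooted_tree_grow cA rt _; rewrite cardX cardS.
Qed.

Lemma spanning_tree_card T : spanning_tree T -> #|T| = n.-1.
Proof.
case=> cT minT; have [S sST [cS <-]] := conn_span_sub cT.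
suff -> : T = S by [].
apply/eqP; rewrite eqEsubset sST andbT; apply/subsetP => e eT.
apply/negPn/negP => eS; apply: (minT e eT); apply: connS cS.
apply/subsetP => x xS; rewrite !inE (subsetP sST _ xS) andbT.
by apply: contraNneq eS => <-.
Qed.
End Connectivity.

Section Packing.
Variables (n : nat) (g : mgraph n).
Implicit Types (C D : {set edge g}).

Lemma card_disjoint_trees m (F : 'I_m -> {set edge g}) :
  (forall i, spanning_tree (F i)) -> (forall i j, i != j -> [disjoint F i & F j]) ->
  #|\bigcup_i F i| = m * n.-1.
Proof.
move=> tF dF; rewrite card_bigcup_disjoint //.
rewrite (eq_bigr (fun=> n.-1)) => [|i _]; last exact: spanning_tree_card.
by rewrite sum_nat_const card_ord.
Qed.

Lemma disjoint_trees_size m : has_disjoint_trees g m -> m * n.-1 <= size g.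
Proof.
case=> F [tF dF]; rewrite -(card_disjoint_trees tF dF).
by rewrite -[X in _ <= X]card_ord; apply: max_card.
Qed.

Lemma disjoint_trees_cut m D : has_disjoint_trees g m -> ~ conn (~: D) -> m <= #|D|.
Proof.
case=> F [tF dF] nD.
have meetD i : 0 < #|F i :&: D|.
  rewrite card_gt0 setI_eq0 disjoints_subset; apply/negP => sFD.
  exact/nD/(connS sFD (tF i).1).
have dFD i j : i != j -> [disjoint F i :&: D & F j :&: D].
  by move/dF/(disjointWl (subsetIl _ D))/(disjointWr (subsetIl _ D)).
apply: (@leq_trans (\sum_i #|F i :&: D|)).
  by rewrite -[X in X <= _]card_ord -sum1_card; apply: leq_sum => i _; apply: meetD.
rewrite -card_bigcup_disjoint //; apply/subset_leq_card/bigcupsP => i _.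
exact: subsetIr.
Qed.

Lemma disjoint_trees_conn m : 0 < m -> has_disjoint_trees g m -> conn [set: edge g].
Proof. by move=> m_gt0 [F [tF _]]; apply: connS (subsetT _) (tF (Ordinal m_gt0)).1. Qed.

Lemma kt_eqP k : 0 < k ->
  kt_eq g k <->
  has_disjoint_trees g k /\ exists2 D : {set edge g}, ~ conn (~: D) & #|D| <= k.
Proof.
move=> k_gt0; split=> [[[[D [nD <-]] _] [_ [trk _]]] | [trk [D nD leDk]]].
  by split=> //; exists D.
split; split.
- by exists D; split=> //; apply/eqP; rewrite eqn_leq leDk (disjoint_trees_cut trk nD).
- by move=> A; apply: disjoint_trees_cut trk.
- exact: disjoint_trees_conn k_gt0 trk.
- by split=> // /disjoint_trees_cut/(_ nD)/leq_trans/(_ leDk); rewrite ltnn.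
Qed.

Lemma min_disconnecting_edge_cut C : conn [set: edge g] -> ~ conn (~: C) ->
  (forall C', ~ conn (~: C') -> #|C| <= #|C'|) -> edge_cut C.
Proof.
move=> cg nC minC; have n_gt0 : 0 < n := ltnW (nconn_gt1 nC).
rewrite /edge_cut (ncomp_conn n_gt0 cg); split; first exact: ncomp_nconn.
move=> C' ltC'C; rewrite (ncomp_conn n_gt0) //; apply/connP.
by case: (connP (~: C')) => // /minC; rewrite leqNgt proper_card.
Qed.

Lemma edge_cut_disconnects C :
  0 < n -> conn [set: edge g] -> edge_cut C -> ~ conn (~: C).
Proof. by move=> n_gt0 cg [+ _] cC; rewrite !(ncomp_conn n_gt0) ?ltnn. Qed.
End Packing.

Section EdgeEmbedding.
Variables (n : nat) (g1 g2 : mgraph n) (phi : edge g1 -> edge g2).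
Hypotheses (phi_inj : injective phi) (ends_phi : forall i, ends (phi i) = ends i).
Implicit Types (B : {set edge g1}) (D : {set edge g2}).

Lemma adj_imset B : adj (phi @: B) =2 adj B.
Proof.
move=> u v; apply/existsP/existsP => [[_ /andP[/imsetP[i iB ->]]] | [i /andP[iB]]].
  by rewrite ends_phi; exists i; rewrite iB.
by rewrite -ends_phi; exists (phi i); rewrite imset_f.
Qed.

Lemma conn_imset B : conn (phi @: B) <-> conn B.
Proof. by split=> cB u v; move: (cB u v); rewrite (eq_connect (adj_imset B)). Qed.

Lemma spanning_tree_imset B : spanning_tree (phi @: B) <-> spanning_tree B.
Proof.
split=> -[cB minB]; split; try exact/conn_imset.
  move=> e eB /(conn_imset (B :\ e)); rewrite imsetD1 //.
  exact/minB/imset_f.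
by move=> _ /imsetP[i iB ->]; rewrite -imsetD1 // => /conn_imset; apply: minB.
Qed.

Lemma disjoint_trees_imset m : has_disjoint_trees g1 m -> has_disjoint_trees g2 m.
Proof.
case=> F [tF dF]; exists (fun i => phi @: F i); split=> [i | i j /dF].
  exact/spanning_tree_imset.
rewrite -!setI_eq0 -imsetI; last exact: in2W phi_inj.
by move/eqP ->; rewrite imset0.
Qed.

Lemma disjoint_trees_preimset m (F : 'I_m -> {set edge g2}) :
  (forall i, spanning_tree (F i)) -> (forall i j, i != j -> [disjoint F i & F j]) ->
  (forall i, F i \subset phi @: setT) -> has_disjoint_trees g1 m.
Proof.
move=> tF dF sF; exists (fun i => phi @^-1: F i); split=> [i | i j /dF].
  apply/spanning_tree_imset; suff -> : phi @: (phi @^-1: F i) = F i by [].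
  apply/eqP; rewrite eqEsubset sub_imset_pre subxx; apply/subsetP => x xF.
  have /imsetP[y _ xy] := subsetP (sF i) x xF.
  by rewrite xy imset_f // inE -xy.
by rewrite -!setI_eq0 -preimsetI => /eqP ->; rewrite preimset0.
Qed.

Lemma nconn_preimset D : ~ conn (~: D) -> ~ conn (~: phi @^-1: D).
Proof.
move=> nD /conn_imset cD; apply/nD/(connS _ cD).
by rewrite sub_imset_pre preimsetC.
Qed.

Lemma card_preimset_inj D : #|phi @^-1: D| <= #|D|.
Proof.
by rewrite -(card_imset _ phi_inj); apply/subset_leq_card; rewrite sub_imset_pre.
Qed.
End EdgeEmbedding.

Section Subgraph.
Variables (n : nat) (g : mgraph n) (A : {set edge g}).

Definition sub_edges := [seq i <- enum 'I_(size g) | i \in A].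

Lemma subgraphE : subgraph A = map (tnth (in_tuple g)) sub_edges.
Proof.
rewrite /subgraph /sub_edges filter_mask map_mask.
by rewrite [in RHS](map_tnth_enum (in_tuple g)).
Qed.

Lemma size_subgraph_edges : size (subgraph A) = size sub_edges.
Proof. by rewrite subgraphE size_map. Qed.

(* Edge j of the subgraph is the j-th edge of A in increasing order. *)
Definition sub_edge (j : edge (subgraph A)) : edge g :=
  tnth (in_tuple sub_edges) (cast_ord size_subgraph_edges j).

Lemma sub_edgeE j x0 : sub_edge j = nth x0 sub_edges j.
Proof. by rewrite /sub_edge (tnth_nth x0). Qed.

Lemma ends_sub_edge j : ends (sub_edge j) = ends j.
Proof.
have nth_subgraph k x0 y0 : k < size sub_edges ->
    nth x0 (subgraph A) k = tnth (in_tuple g) (nth y0 sub_edges k).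
  by move=> lt_k; rewrite subgraphE (nth_map y0).
rewrite /ends [RHS](tnth_nth (ends (sub_edge j))) (nth_subgraph _ _ (sub_edge j)).
  by rewrite -sub_edgeE.
by rewrite -size_subgraph_edges.
Qed.

Lemma sub_edge_inj : injective sub_edge.
Proof.
move=> j1 j2; pose x0 := sub_edge j1.
rewrite (sub_edgeE j1 x0) (sub_edgeE j2 x0) => /eqP.
have uniq_sub : uniq sub_edges by apply/filter_uniq/enum_uniq.
by rewrite nth_uniq -?size_subgraph_edges // => /eqP/val_inj.
Qed.

Lemma imset_sub_edge : sub_edge @: setT = A.
Proof.
apply/setP => x; apply/imsetP/idP => [[j _ ->] | xA].
  have := mem_tnth (cast_ord size_subgraph_edges j) (in_tuple sub_edges).
  by rewrite mem_filter => /andP[].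
have xs : x \in sub_edges by rewrite mem_filter xA mem_enum.
have lt_x : index x sub_edges < size (subgraph A) by rewrite size_subgraph_edges index_mem.
by exists (Ordinal lt_x); rewrite // (sub_edgeE _ x) nth_index.
Qed.

Lemma size_subgraph : size (subgraph A) = #|A|.
Proof.
by rewrite -{2}imset_sub_edge (card_imset _ sub_edge_inj) cardsT card_ord.
Qed.

Lemma loopless_subgraph : loopless g -> loopless (subgraph A).
Proof.
move=> lg; rewrite /loopless subgraphE all_map; apply/allP => i _.
exact/(allP lg)/mem_tnth.
Qed.
End Subgraph.

Lemma disjoint_trees_cut_inF n (g : mgraph n) k (D : {set edge g}) :
  0 < k -> loopless g -> has_disjoint_trees g k -> ~ conn (~: D) -> #|D| <= k ->
  exists A : {set edge g}, inF k n (subgraph A).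
Proof.
move=> k_gt0 lg [F [tF dF]] nD leDk; pose U := \bigcup_i F i; exists U.
have FU i : F i \subset @sub_edge _ _ U @: setT.
  by rewrite imset_sub_edge; apply: bigcup_sup.
have trH := disjoint_trees_preimset (@sub_edge_inj _ _ U) (@ends_sub_edge _ _ U) tF dF FU.
split; first exact: nconn_gt1 nD.
split; first exact: loopless_subgraph.
split.
  apply/kt_eqP => //; split=> //; exists (@sub_edge _ _ U @^-1: D).
    exact (nconn_preimset (@ends_sub_edge _ _ U) nD).
  exact: leq_trans (card_preimset_inj (@sub_edge_inj _ _ U) D) leDk.
move=> g' _ /(kt_eqP _ k_gt0) [trg' _].
by rewrite size_subgraph (card_disjoint_trees tF dF); apply: disjoint_trees_size.
Qed.

Theorem theorem4p4 (k n : nat) (hk : 0 < k) (hn : 0 < n)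
    (g : mgraph n) (hg : loopless g) :
  kt_eq g k <->
  ((exists C : {set edge g}, edge_cut C /\ #|C| = k) /\
   (exists A : {set edge g}, inF k n (subgraph A))).
Proof.
split=> [/(kt_eqP _ hk) [trg [D nD leDk]] | [[C [cutC cardC]] [A [_ [_ [ktH _]]]]]].
  split; last exact: disjoint_trees_cut_inF hk hg trg nD leDk.
  exists D; split; last by apply/eqP; rewrite eqn_leq leDk (disjoint_trees_cut trg nD).
  apply: min_disconnecting_edge_cut (disjoint_trees_conn hk trg) nD _ => C' nC'.
  exact: leq_trans leDk (disjoint_trees_cut trg nC').
have [trH _] := (kt_eqP _ hk).1 ktH.
have trg := disjoint_trees_imset (@sub_edge_inj _ _ A) (@ends_sub_edge _ _ A) trH.
apply/(kt_eqP _ hk); split=> //; exists C; last by rewrite cardC.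
exact: edge_cut_disconnects hn (disjoint_trees_conn hk trg) cutC.
Qed.
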